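(* Let $N\ge 1$, let $\mathbf{W}^0$ be a real $N\times N$ matrix (the adjacency matrix), let $a,w\in\mathbb{R}$ and $S_x>0$, and assume the spectral radius of $a w\mathbf{W}^0$ is less than $1$. Define the (zero-frequency) cross-spectrum matrix $$\mathbf{S}_y=S_x\,(\mathbf{I}-a w\mathbf{W}^0)^{-1}(\mathbf{I}-a w(\mathbf{W}^0)^T)^{-1},$$ and set $g=N a w$. Let $\kappa_n$ ($n\ge1$) and $\kappa_{n,m}$ ($n,m\ge1$) be the motif cumulants of $\mathbf{W}^0$ defined below, and assume $\sum_{n\ge1}|g|^n|\kappa_n|<1$ and $\sum_{n,m\ge1}|g|^{n+m}|\kappa_{n,m}|<\infty$. Then $$\frac{\langle \mathbf{S}_y\rangle}{S_x}=\frac{1}{N}\Big(1-\sum_{n=1}^\infty g^n\kappa_n\Big)^{-2}\Big(1+\sum_{n,m=1}^\infty g^{n+m}\kappa_{n,m}\Big).$$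
   Context: This models a network of $N$ linearly interacting stochastic units $y_i=x_i+A*\sum_j \mathbf{W}_{ij}y_j$ with $\mathbf{W}=w\mathbf{W}^0$, identical independent baseline processes $x_i$ of auto-spectrum $S_x$, and $a=\tilde A(0)$ the (real) zero-frequency value of the Fourier transform of the linear response kernel; $\mathbf{S}_y$ above is then the matrix of total covariances. Notation: for an $N\times N$ matrix $\mathbf{X}$, $\langle\mathbf{X}\rangle=\frac1{N^2}\sum_{i,j}\mathbf{X}_{ij}$ (empirical average of the entries). Motif moments: for integers $n,m\ge0$, $\mu_{n,m}=\langle(\mathbf{W}^0)^n((\mathbf{W}^0)^T)^m\rangle/N^{n+m-1}$, and $\mu_n:=\mu_{n,0}$ (so $\mu_{0,0}=1$). A composition of a positive integer $n$ is an ordered tuple $(n_1,\dots,n_t)$ of positive integers with $n_1+\dots+n_t=n$; $\mathcal{C}(n)$ denotes the set of compositions of $n$. Motif cumulants: the numbers $\kappa_n$ ($n\ge1$) and $\kappa_{n,m}$ ($n,m\ge1$) are defined recursively (uniquely) by requiring, for all $n,m\ge1$, $$\mu_n=\sum_{(n_1,\dots,n_t)\in\mathcal{C}(n)}\prod_{i=1}^t\kappa_{n_i},\qquad \mu_{n,m}=\sum_{\substack{(n_1,\dots,n_t)\in\mathcal{C}(n)\\(m_1,\dots,m_s)\in\mathcal{C}(m)}}\Big(\prod_{i=2}^t\kappa_{n_i}\Big)\big(\kappa_{n_1,m_1}+\kappa_{n_1}\kappa_{m_1}\big)\Big(\prod_{j=2}^s\kappa_{m_j}\Big),$$ where an empty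 product equals $1$. *)

(* real numbers (Stdlib Reals) are needed for infinite series.
   N x N real matrices are represented as functions nat -> nat -> R, of which
   only the entries with indices < N are ever used. *)
From Stdlib Require Import Reals List ClassicalEpsilon.
Import ListNotations.
Open Scope R_scope.

Definition mat := nat -> nat -> R.
Definition vec := nat -> R.

Fixpoint fsum (n : nat) (f : nat -> R) : R :=
  match n with
  | O => 0
  | S k => fsum k f + f k
  end.

Definition mmul (N : nat) (A B : mat) : mat :=
  fun i j => fsum N (fun k => A i k * B k j).
Definition mid : mat := fun i j => if Nat.eqb i j then 1 else 0.
Definition mtr (A : mat) : mat := fun i j => A j i.
Definition mscale (c : R) (A : mat) : mat := fun i j => c * A i j.
Definition msub (A B : mat) : mat := fun i j => A i j - B i j.
Fixpoint mpow (N : nat) (A : mat) (n : nat) : mat :=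
  match n with
  | O => mid
  | S k => mmul N A (mpow N A k)
  end.
Definition mvec (N : nat) (A : mat) (x : vec) : vec :=
  fun i => fsum N (fun j => A i j * x j).

Definition meq (N : nat) (A B : mat) : Prop :=
  forall i j, (i < N)%nat -> (j < N)%nat -> A i j = B i j.

(* the inverse matrix (chosen by epsilon; unique on indices < N when it exists) *)
Definition minv (N : nat) (A : mat) : mat :=
  epsilon (inhabits (fun _ _ => 0))
    (fun B => meq N (mmul N A B) mid /\ meq N (mmul N B A) mid).

(* spectral radius of A is < 1: every complex eigenvalue p + i q (with complex
   eigenvector x + i y, written out in real and imaginary parts) has modulus < 1 *)
Definition spectral_radius_lt1 (N : nat) (A : mat) : Prop :=
  forall (p q : R) (x y : vec),
    (exists i, (i < N)%nat /\ (x i <> 0 \/ y i <> 0)) ->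
    (forall i, (i < N)%nat ->
       mvec N A x i = p * x i - q * y i /\ mvec N A y i = q * x i + p * y i) ->
    p * p + q * q < 1.

Definition mavg (N : nat) (X : mat) : R :=
  fsum N (fun i => fsum N (fun j => X i j)) / (INR N ^ 2).

Definition mu (N : nat) (W0 : mat) (n m : nat) : R :=
  mavg N (mmul N (mpow N W0 n) (mpow N (mtr W0) m))
  / powerRZ (INR N) (Z.of_nat (n + m) - 1)%Z.

(* compositions of n: lists of positive integers summing to n
   (first part k+1, then a composition of the rest); fuel >= n suffices *)
Fixpoint compsF (fuel n : nat) : list (list nat) :=
  match fuel with
  | O => match n with O => [ [] ] | S _ => [] end
  | S f => match n with
           | O => [ [] ]
           | S _ => flat_map (fun k => map (cons (S k)) (compsF f (n - S k)))
                             (seq 0 n)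
           end
  end.
Definition compositions (n : nat) : list (list nat) := compsF n n.

Definition lsum (l : list R) : R := fold_right Rplus 0 l.
Definition lprod (l : list R) : R := fold_right Rmult 1 l.

Definition motif_cumulants (N : nat) (W0 : mat)
    (kap : nat -> R) (kap2 : nat -> nat -> R) : Prop :=
  (forall n, (1 <= n)%nat ->
     mu N W0 n 0 = lsum (map (fun c => lprod (map kap c)) (compositions n))) /\
  (forall n m, (1 <= n)%nat -> (1 <= m)%nat ->
     mu N W0 n m =
     lsum (flat_map (fun c1 => map (fun c2 =>
        match c1, c2 with
        | n1 :: r1, m1 :: r2 =>
            lprod (map kap r1) * (kap2 n1 m1 + kap n1 * kap m1) * lprod (map kap r2)
        | _, _ => 0
        end) (compositions m)) (compositions n))).

Definition Sy (N : nat) (Sx : R) (A : mat) : mat :=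
  mscale Sx (mmul N (minv N (msub mid A)) (minv N (msub mid (mtr A)))).

Definition dsum (K : nat) (f : nat -> nat -> R) : R :=
  fsum K (fun i => fsum K (fun j => f (S i) (S j))).

From Stdlib Require Import Arith Reals Lra Lia List ClassicalEpsilon.
From mathcomp Require ssreflect ssrfun ssrbool eqtype ssrnat fintype bigop ssralg matrix Rstruct.
(* Requiring MathComp switches bullets off globally; restore them. *)
Set Bullet Behavior "Strict Subproofs".
Open Scope R_scope.

(* Put A = a w W0, g = N a w and x_n = (A^T)^n 1.  Then x_n . x_m is the entry sum
   of A^n (A^T)^m, i.e. N g^(n+m) mu_(n,m).  Define vectors
       z_0 = 1,    z_(n+1) = A^T z_n - g^(n+1) kappa_(n+1) 1.
   Unfolding the recursion gives x_n = sum_(j<=n) p_(n-j) z_j with p_n = g^n mu_n,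
   and the cumulant relations say that the z_j are orthogonal in the sense
   z_i . z_j = N e_ij, where e_00 = 1, e_ij = g^(i+j) kappa_(i,j) for i, j >= 1 and
   e_ij = 0 otherwise (the triangular system relating the two Gram matrices is
   invertible).  The bound on the kappa_(n,m) series makes this Gram matrix
   absolutely summable, so Z = sum_j z_j converges, Z . Z = N (1 + sum g^(n+m) kappa_nm),
   and summing the recursion gives (I - A^T) Z = (1 - sum g^n kappa_n) 1, which also
   yields the convergence of the kappa_n series.  Finally the entry sum of
   (I - A)^-1 (I - A^T)^-1 is y . y, where y = (I - A^T)^-1 1 = Z / (1 - sum g^n kappa_n). *)

Lemma fsum_ext n f g : (forall k, (k < n)%nat -> f k = g k) -> fsum n f = fsum n g.
Proof.
  induction n as [|n IH]; intros H; simpl; auto.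
  rewrite IH by (intros; apply H; lia). rewrite (H n) by lia. reflexivity.
Qed.

Lemma fsum_plus n f g : fsum n (fun k => f k + g k) = fsum n f + fsum n g.
Proof. induction n as [|n IH]; simpl; [lra|]. rewrite IH; lra. Qed.

Lemma fsum_minus n f g : fsum n (fun k => f k - g k) = fsum n f - fsum n g.
Proof. induction n as [|n IH]; simpl; [lra|]. rewrite IH; lra. Qed.

Lemma fsum_scal_l n c f : fsum n (fun k => c * f k) = c * fsum n f.
Proof. induction n as [|n IH]; simpl; [lra|]. rewrite IH; lra. Qed.

Lemma fsum_scal_r n c f : fsum n (fun k => f k * c) = fsum n f * c.
Proof. induction n as [|n IH]; simpl; [lra|]. rewrite IH; lra. Qed.

Lemma fsum_zero n f : (forall k, (k < n)%nat -> f k = 0) -> fsum n f = 0.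
Proof.
  induction n as [|n IH]; intros H; simpl; auto.
  rewrite IH by (intros; apply H; lia). rewrite H by lia. lra.
Qed.

Lemma fsum_const n c : fsum n (fun _ => c) = INR n * c.
Proof. induction n as [|n IH]; simpl fsum; [simpl; lra|]. rewrite IH, S_INR; lra. Qed.

Lemma fsum_swap n m (f : nat -> nat -> R) :
  fsum n (fun i => fsum m (fun j => f i j)) = fsum m (fun j => fsum n (fun i => f i j)).
Proof.
  induction n as [|n IH]; simpl.
  - symmetry; apply fsum_zero; auto.
  - rewrite IH, <- fsum_plus; auto.
Qed.

Lemma fsum_shift n f : fsum (S n) f = f 0%nat + fsum n (fun i => f (S i)).
Proof. induction n as [|n IH]; simpl in *; [lra|]. rewrite IH; lra. Qed.

Lemma fsum_split K d f : fsum (K + d) f = fsum K f + fsum d (fun i => f (K + i)%nat).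
Proof.
  induction d as [|d IH]; simpl.
  - rewrite Nat.add_0_r; lra.
  - rewrite Nat.add_succ_r; simpl; rewrite IH; lra.
Qed.

Lemma fsum_nonneg n f : (forall k, (k < n)%nat -> 0 <= f k) -> 0 <= fsum n f.
Proof.
  induction n as [|n IH]; intros H; simpl; [lra|].
  assert (0 <= fsum n f) by (apply IH; intros; apply H; lia).
  assert (0 <= f n) by (apply H; lia). lra.
Qed.

Lemma fsum_le n f g : (forall k, (k < n)%nat -> f k <= g k) -> fsum n f <= fsum n g.
Proof.
  induction n as [|n IH]; intros H; simpl; [lra|].
  assert (fsum n f <= fsum n g) by (apply IH; intros; apply H; lia).
  assert (f n <= g n) by (apply H; lia). lra.
Qed.

Lemma fsum_abs n f : Rabs (fsum n f) <= fsum n (fun k => Rabs (f k)).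
Proof.
  induction n as [|n IH]; simpl; [rewrite Rabs_R0; lra|].
  eapply Rle_trans; [apply Rabs_triang|]. lra.
Qed.

Lemma fsum_ge_term n f k :
  (forall i, (i < n)%nat -> 0 <= f i) -> (k < n)%nat -> f k <= fsum n f.
Proof.
  intros H Hk. replace n with (k + S (n - S k))%nat by lia.
  rewrite fsum_split, fsum_shift, Nat.add_0_r.
  assert (0 <= fsum k f) by (apply fsum_nonneg; intros; apply H; lia).
  assert (0 <= fsum (n - S k) (fun i => f (k + S i)%nat))
    by (apply fsum_nonneg; intros; apply H; lia).
  lra.
Qed.

Lemma sum_f_R0_fsum f n : sum_f_R0 f n = fsum (S n) f.
Proof. induction n as [|n IH]; simpl in *; [lra|]. rewrite IH; auto. Qed.

Lemma fsum2_shift K (F : nat -> nat -> R) :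
  fsum (S K) (fun i => fsum (S K) (fun j => F i j)) =
  F 0%nat 0%nat + fsum K (fun j => F 0%nat (S j)) + fsum K (fun i => F (S i) 0%nat)
  + fsum K (fun i => fsum K (fun j => F (S i) (S j))).
Proof.
  rewrite fsum_shift, fsum_shift.
  rewrite (fsum_ext K (fun i => fsum (S K) (fun j => F (S i) j))
             (fun i => F (S i) 0%nat + fsum K (fun j => F (S i) (S j))))
    by (intros; apply fsum_shift).
  rewrite fsum_plus. lra.
Qed.

Lemma mid_sym i j : mid i j = mid j i.
Proof. unfold mid. rewrite Nat.eqb_sym; auto. Qed.

Lemma fsum_mid_l n k f : (k < n)%nat -> fsum n (fun j => mid k j * f j) = f k.
Proof.
  intros Hk. replace n with (k + S (n - S k))%nat by lia.
  rewrite fsum_split, fsum_shift, Nat.add_0_r.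
  rewrite fsum_zero, (fsum_zero (n - S k)).
  - unfold mid; rewrite Nat.eqb_refl; lra.
  - intros j _; unfold mid. destruct (Nat.eqb_spec k (k + S j)); [lia | lra].
  - intros j Hj; unfold mid. destruct (Nat.eqb_spec k j); [lia | lra].
Qed.

Lemma fsum_mid_r n k f : (k < n)%nat -> fsum n (fun j => f j * mid j k) = f k.
Proof.
  intros Hk. rewrite <- (fsum_mid_l n k f) by auto.
  apply fsum_ext; intros. rewrite mid_sym; lra.
Qed.

Definition dot (N : nat) (u v : vec) : R := fsum N (fun k => u k * v k).

Lemma dot_ext N u u' v v' :
  (forall k, (k < N)%nat -> u k = u' k) -> (forall k, (k < N)%nat -> v k = v' k) ->
  dot N u v = dot N u' v'.
Proof. intros Hu Hv. apply fsum_ext; intros k Hk. rewrite Hu, Hv by auto. reflexivity. Qed.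

Lemma dot_sym N u v : dot N u v = dot N v u.
Proof. apply fsum_ext; intros; lra. Qed.

Lemma dot_sums N n m (u v : nat -> vec) :
  dot N (fun k => fsum n (fun i => u i k)) (fun k => fsum m (fun j => v j k))
  = fsum n (fun i => fsum m (fun j => dot N (u i) (v j))).
Proof.
  unfold dot.
  rewrite (fsum_ext N _ (fun k => fsum n (fun i => fsum m (fun j => u i k * v j k)))).
  - rewrite fsum_swap. apply fsum_ext; intros i _. apply fsum_swap.
  - intros k _. rewrite <- fsum_scal_r. apply fsum_ext; intros i _.
    rewrite <- fsum_scal_l. reflexivity.
Qed.

Lemma mmul_assoc N X Y Z i j : mmul N (mmul N X Y) Z i j = mmul N X (mmul N Y Z) i j.
Proof.
  unfold mmul. rewrite (fsum_ext N _ (fun k => fsum N (fun l => X i l * Y l k * Z k j)))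
    by (intros; rewrite <- fsum_scal_r; reflexivity).
  rewrite fsum_swap. apply fsum_ext; intros l _.
  rewrite <- fsum_scal_l. apply fsum_ext; intros; lra.
Qed.

Lemma mvec_mmul N X Y v k : mvec N (mmul N X Y) v k = mvec N X (mvec N Y v) k.
Proof.
  unfold mvec, mmul. rewrite (fsum_ext N _ (fun j => fsum N (fun l => X k l * Y l j * v j)))
    by (intros; rewrite <- fsum_scal_r; reflexivity).
  rewrite fsum_swap. apply fsum_ext; intros l _.
  rewrite <- fsum_scal_l. apply fsum_ext; intros; lra.
Qed.

Lemma mvec_mid N v k : (k < N)%nat -> mvec N mid v k = v k.
Proof. apply fsum_mid_l. Qed.

Lemma mtr_mmul N X Y i j : mmul N (mtr X) (mtr Y) i j = mmul N Y X j i.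
Proof. unfold mmul, mtr. apply fsum_ext; intros; lra. Qed.

Lemma mpow_S_r N A n i j : (i < N)%nat -> (j < N)%nat ->
  mpow N A (S n) i j = mmul N (mpow N A n) A i j.
Proof.
  revert i j. induction n as [|n IH]; intros i j Hi Hj.
  - unfold mpow, mmul. rewrite fsum_mid_r, fsum_mid_l by auto. reflexivity.
  - change (mmul N A (mpow N A (S n)) i j = mmul N (mmul N A (mpow N A n)) A i j).
    rewrite mmul_assoc. apply fsum_ext; intros k Hk. rewrite IH by auto. reflexivity.
Qed.

Lemma mpow_scale N c W n i j : mpow N (mscale c W) n i j = c ^ n * mpow N W n i j.
Proof.
  revert i j; induction n as [|n IH]; intros i j; simpl; [lra|].
  unfold mmul. rewrite <- fsum_scal_l. apply fsum_ext; intros k _.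
  rewrite IH. unfold mscale. lra.
Qed.

(** * Inverses *)

Definition injective_on (N : nat) (B : mat) : Prop :=
  forall v : vec, (forall i, (i < N)%nat -> mvec N B v i = 0) ->
  forall i, (i < N)%nat -> v i = 0.

Definition has_inverse (N : nat) (B : mat) : Prop :=
  exists C, meq N (mmul N B C) mid /\ meq N (mmul N C B) mid.

(* A square matrix which is injective on [R^N] has a two-sided inverse; this is
   transferred from MathComp's determinant theory ([det0P], [mulmxV]). *)
Module MatrixBridge.
Import ssreflect ssrfun ssrbool eqtype ssrnat fintype bigop ssralg matrix Rstruct.
Import GRing.Theory.
Local Open Scope ring_scope.

Lemma fsum_big (m : nat) (f : nat -> R) : fsum m f = \sum_(k < m) f k.
Proof.
elim: m => [|m IH] /=; first by rewrite big_ord0.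
by rewrite big_ord_recr /= IH.
Qed.

Section Square.
Variables (n : nat) (B : mat).
Let M : 'M[R]_n.+1 := \matrix_(i, j) B i j.

Lemma mid_inord i j : (i < n.+1)%N -> (j < n.+1)%N ->
  mid i j = ((inord i : 'I_n.+1) == inord j)%:R.
Proof.
move=> ilt jlt; rewrite /mid; case: (PeanoNat.Nat.eqb_spec i j) => [->|ne].
  by rewrite eqxx.
by case: eqP => // /(congr1 val); rewrite /= !inordK.
Qed.

Lemma det_neq0_of_injective : injective_on n.+1 B -> \det M != 0.
Proof.
move=> inj; rewrite -det_tr; apply/negP => /det0P [v vn0 vM0].
pose vf k := if (k < n.+1)%N then v ord0 (inord k) else 0.
have vf0 : forall i, (i < n.+1)%coq_nat -> vf i = 0.
  apply: inj => i /ssrnat.ltP ilt.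
  have := congr1 (fun X : 'M[R]_(1, n.+1) => X ord0 (inord i)) vM0.
  rewrite !mxE => E; rewrite /mvec fsum_big; apply: etrans E.
  by apply: eq_bigr => j _; rewrite !mxE /vf ltn_ord inord_val inordK // mulrC.
apply/negP: vn0; rewrite negbK; apply/eqP/matrixP => i j.
rewrite (ord1 i) mxE.
by have := vf0 j (ssrnat.ltP (ltn_ord j)); rewrite /vf ltn_ord inord_val.
Qed.

Lemma inverse_of_injective : injective_on n.+1 B -> has_inverse n.+1 B.
Proof.
move=> inj; have uM : M \in unitmx by rewrite unitmxE unitfE det_neq0_of_injective.
exists (fun k j => invmx M (inord k) (inord j)).
split => i j /ssrnat.ltP ilt /ssrnat.ltP jlt; rewrite /mmul fsum_big mid_inord //.
- have := congr1 (fun X : 'M[R]_n.+1 => X (inord i) (inord j)) (mulmxV uM).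
  rewrite !mxE => <-; by apply: eq_bigr => k _; rewrite !mxE inordK // inord_val.
- have := congr1 (fun X : 'M[R]_n.+1 => X (inord i) (inord j)) (mulVmx uM).
  rewrite !mxE => <-; by apply: eq_bigr => k _; rewrite !mxE inordK // inord_val.
Qed.
End Square.
End MatrixBridge.

Lemma injective_has_inverse N B : injective_on N B -> has_inverse N B.
Proof.
  destruct N as [|n]; intros Hinj.
  - exists (fun _ _ => 0). split; intros i j Hi; lia.
  - apply MatrixBridge.inverse_of_injective; exact Hinj.
Qed.

Lemma minv_spec N B : has_inverse N B ->
  meq N (mmul N B (minv N B)) mid /\ meq N (mmul N (minv N B) B) mid.
Proof. intros H. unfold minv. apply epsilon_spec. exact H. Qed.

Lemma mvec_meq N X Y v k : meq N X Y -> (k < N)%nat -> mvec N X v k = mvec N Y v k.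
Proof. intros H Hk. apply fsum_ext; intros j Hj. rewrite H by auto. reflexivity. Qed.

Lemma left_inverse_eq_right N B L Rt :
  meq N (mmul N L B) mid -> meq N (mmul N B Rt) mid -> meq N L Rt.
Proof.
  intros HL HR i j Hi Hj.
  transitivity (mmul N L (mmul N B Rt) i j).
  - unfold mmul at 1. rewrite <- (fsum_mid_r N j (L i)) by auto.
    apply fsum_ext; intros k Hk. rewrite HR by auto. reflexivity.
  - rewrite <- mmul_assoc. rewrite <- (fsum_mid_l N i (fun k => Rt k j)) by auto.
    apply fsum_ext; intros k Hk. rewrite HL by auto. reflexivity.
Qed.

Lemma transpose_minv_inverse N A : injective_on N (msub mid A) ->
  meq N (mmul N (msub mid (mtr A)) (mtr (minv N (msub mid A)))) mid /\
  meq N (mmul N (mtr (minv N (msub mid A))) (msub mid (mtr A))) mid.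
Proof.
  intros Hinj.
  destruct (minv_spec N _ (injective_has_inverse N _ Hinj)) as [H1 H2].
  split; intros i j Hi Hj; rewrite mid_sym, <- mtr_mmul;
    [rewrite <- (H2 j i) by auto | rewrite <- (H1 j i) by auto];
    apply fsum_ext; intros k _; unfold msub, mtr; rewrite mid_sym; reflexivity.
Qed.

Lemma minv_transpose N A : injective_on N (msub mid A) ->
  meq N (minv N (msub mid (mtr A))) (mtr (minv N (msub mid A))).
Proof.
  intros Hinj. destruct (transpose_minv_inverse N A Hinj) as [HR HL].
  destruct (minv_spec N _ (ex_intro _ _ (conj HR HL))) as [_ HM].
  exact (left_inverse_eq_right N _ _ _ HM HR).
Qed.

(* Spectral radius below 1 excludes the eigenvalue 1, so [I - A] is injective. *)
Lemma spectral_radius_injective N A : spectral_radius_lt1 N A -> injective_on N (msub mid A).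
Proof.
  intros Hsr v Hv i Hi. destruct (Req_dec (v i) 0) as [|Hne]; auto. exfalso.
  assert (Hfix : forall k, (k < N)%nat -> mvec N A v k = v k).
  { intros k Hk. specialize (Hv k Hk). unfold mvec, msub in Hv |- *.
    rewrite (fsum_ext N _ (fun j => mid k j * v j - A k j * v j)) in Hv by (intros; ring).
    rewrite fsum_minus, fsum_mid_l in Hv by auto. lra. }
  assert (H : 1 * 1 + 0 * 0 < 1).
  { apply (Hsr 1 0 v (fun _ => 0)).
    - exists i; auto.
    - intros k Hk. rewrite Hfix by auto. unfold mvec. rewrite fsum_zero by (intros; ring).
      split; ring. }
  lra.
Qed.

(* The entry sum of [(I - A)^-1 (I - A^T)^-1] is [y.y], where [y] are the row sums
   of [(I - A^T)^-1]; if [(I - A^T) Z = c 1] then [Z = c y]. *)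
Lemma resolvent_entry_sum N A Z c : injective_on N (msub mid A) ->
  (forall k, (k < N)%nat -> mvec N (msub mid (mtr A)) Z k = c) ->
  fsum N (fun i => fsum N (fun j =>
     mmul N (minv N (msub mid A)) (minv N (msub mid (mtr A))) i j)) * c ^ 2 = dot N Z Z.
Proof.
  intros Hinj HZ.
  pose proof (minv_transpose N A Hinj) as Htr.
  destruct (transpose_minv_inverse N A Hinj) as [HR HL].
  destruct (minv_spec N _ (ex_intro _ _ (conj HR HL))) as [_ HM2].
  set (M1 := minv N (msub mid A)) in *. set (M2 := minv N (msub mid (mtr A))) in *.
  set (y := fun k => fsum N (fun j => M2 k j)).
  assert (HZy : forall k, (k < N)%nat -> Z k = c * y k).
  { intros k Hk. rewrite <- (mvec_mid N Z k), <- (mvec_meq N _ _ Z k HM2), mvec_mmul by auto.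
    unfold mvec at 1, y. rewrite <- fsum_scal_l.
    apply fsum_ext; intros j Hj. rewrite HZ by auto. ring. }
  assert (Hsum : fsum N (fun i => fsum N (fun j => mmul N M1 M2 i j)) = dot N y y).
  { unfold mmul, dot.
    rewrite (fsum_ext N _ (fun i => fsum N (fun l => M1 i l * y l))).
    - rewrite fsum_swap. apply fsum_ext; intros l Hl. rewrite fsum_scal_r. f_equal.
      apply fsum_ext; intros i Hi. rewrite Htr by auto. reflexivity.
    - intros i _. rewrite fsum_swap. apply fsum_ext; intros l _.
      unfold y. rewrite fsum_scal_l. reflexivity. }
  rewrite Hsum. unfold dot. rewrite <- fsum_scal_r.
  apply fsum_ext; intros k Hk. rewrite HZy by auto. ring.
Qed.

(** * Sums over compositions *)

Lemma lsum_app l1 l2 : lsum (l1 ++ l2) = lsum l1 + lsum l2.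
Proof. induction l1 as [|x l IH]; simpl; [lra|]. rewrite IH; lra. Qed.

Lemma lsum_concat (L : list (list R)) : lsum (concat L) = lsum (map lsum L).
Proof. induction L as [|l L IH]; simpl; auto. rewrite lsum_app, IH; auto. Qed.

Lemma lsum_seq n f : lsum (map f (seq 0 n)) = fsum n f.
Proof.
  induction n as [|n IH]; [reflexivity|].
  rewrite seq_S, map_app, lsum_app, IH. simpl. lra.
Qed.

Lemma lsum_scal_l {A} (f : A -> R) c l : lsum (map (fun x => c * f x) l) = c * lsum (map f l).
Proof. induction l as [|x l IH]; simpl; [lra|]. rewrite IH; lra. Qed.

Lemma lsum_scal_r {A} (f : A -> R) c l : lsum (map (fun x => f x * c) l) = lsum (map f l) * c.
Proof. induction l as [|x l IH]; simpl; [lra|]. rewrite IH; lra. Qed.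

Lemma lsum_fsum {A} (F : A -> nat -> R) m l :
  lsum (map (fun x => fsum m (F x)) l) = fsum m (fun j => lsum (map (fun x => F x j) l)).
Proof.
  induction l as [|x l IH]; simpl.
  - symmetry; apply fsum_zero; auto.
  - rewrite IH, <- fsum_plus; auto.
Qed.

Lemma compsF_S_S fuel n : compsF (S fuel) (S n) =
  flat_map (fun k => map (cons (S k)) (compsF fuel (S n - S k))) (seq 0 (S n)).
Proof. reflexivity. Qed.

Lemma compsF_fuel fuel n : (n <= fuel)%nat -> compsF (S fuel) n = compsF fuel n.
Proof.
  revert n; induction fuel as [|f IH]; intros n Hn.
  - destruct n; [reflexivity | lia].
  - destruct n as [|n']; [reflexivity|].
    rewrite !compsF_S_S, !flat_map_concat_map. f_equal.
    apply map_ext_in; intros k Hk. apply in_seq in Hk. rewrite IH by lia. reflexivity.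
Qed.

Lemma compsF_compositions fuel n : (n <= fuel)%nat -> compsF fuel n = compositions n.
Proof.
  intros Hn. replace fuel with (n + (fuel - n))%nat by lia.
  induction (fuel - n)%nat as [|d IH].
  - rewrite Nat.add_0_r. reflexivity.
  - rewrite Nat.add_succ_r, compsF_fuel by lia. exact IH.
Qed.

Lemma lsum_compositions_S (F : list nat -> R) n :
  lsum (map F (compositions (S n))) =
  fsum (S n) (fun k => lsum (map (fun r => F (S k :: r)) (compositions (n - k)))).
Proof.
  unfold compositions at 1.
  rewrite compsF_S_S, flat_map_concat_map, concat_map, lsum_concat, !map_map, lsum_seq.
  apply fsum_ext; intros k Hk.
  rewrite map_map, compsF_compositions by lia. reflexivity.
Qed.

Section Compositions.
Variable kap : nat -> R.

Definition comp_sum (n : nat) : R :=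
  lsum (map (fun c => lprod (map kap c)) (compositions n)).

Lemma comp_sum_0 : comp_sum 0 = 1.
Proof. unfold comp_sum, compositions; simpl. lra. Qed.

Lemma comp_sum_S n : comp_sum (S n) = fsum (S n) (fun k => kap (S k) * comp_sum (n - k)).
Proof.
  unfold comp_sum at 1. rewrite lsum_compositions_S.
  apply fsum_ext; intros k _. apply lsum_scal_l.
Qed.

Lemma double_comp_sum (kap2 : nat -> nat -> R) n m :
  lsum (flat_map (fun c1 => map (fun c2 =>
        match c1, c2 with
        | n1 :: r1, m1 :: r2 =>
            lprod (map kap r1) * (kap2 n1 m1 + kap n1 * kap m1) * lprod (map kap r2)
        | _, _ => 0
        end) (compositions (S m))) (compositions (S n)))
  = fsum (S n) (fun k => fsum (S m) (fun l =>
       comp_sum (n - k) * (kap2 (S k) (S l) + kap (S k) * kap (S l)) * comp_sum (m - l))).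
Proof.
  rewrite flat_map_concat_map, lsum_concat, map_map, lsum_compositions_S.
  apply fsum_ext; intros k _.
  rewrite (map_ext _ (fun r1 => fsum (S m) (fun l => lprod (map kap r1) *
              ((kap2 (S k) (S l) + kap (S k) * kap (S l)) * comp_sum (m - l)))))
    by (intros r1; rewrite lsum_compositions_S; apply fsum_ext; intros l _;
        unfold comp_sum; rewrite <- !lsum_scal_l; f_equal; apply map_ext; intros; ring).
  rewrite lsum_fsum. apply fsum_ext; intros l _.
  rewrite lsum_scal_r. unfold comp_sum. ring.
Qed.
End Compositions.

(** * Motif moments as inner products *)

(* [ones_iter N A n = (A^T)^n 1]; its entries are the column sums of [A^n]. *)
Fixpoint ones_iter (N : nat) (A : mat) (n : nat) : vec :=
  match n with
  | O => fun _ => 1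
  | S n' => mvec N (mtr A) (ones_iter N A n')
  end.

Lemma colsum_mpow N A n k : (k < N)%nat ->
  fsum N (fun i => mpow N A n i k) = ones_iter N A n k.
Proof.
  revert k. induction n as [|n IH]; intros k Hk.
  - simpl. rewrite <- (fsum_mid_r N k (fun _ => 1)) by auto. apply fsum_ext; intros; lra.
  - rewrite (fsum_ext _ _ (fun i => mmul N (mpow N A n) A i k))
      by (intros; apply mpow_S_r; auto).
    simpl. unfold mmul, mvec, mtr. rewrite fsum_swap. apply fsum_ext; intros l Hl.
    rewrite fsum_scal_r, IH by auto. lra.
Qed.

Lemma rowsum_mpow_tr N A m k : (k < N)%nat ->
  fsum N (fun j => mpow N (mtr A) m k j) = ones_iter N A m k.
Proof.
  revert k. induction m as [|m IH]; intros k Hk.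
  - simpl. rewrite <- (fsum_mid_l N k (fun _ => 1)) by auto. apply fsum_ext; intros; lra.
  - simpl. unfold mmul, mvec. rewrite fsum_swap. apply fsum_ext; intros l Hl.
    rewrite fsum_scal_l, IH by auto. lra.
Qed.

Lemma entry_sum_mpow N A n m :
  fsum N (fun i => fsum N (fun j => mmul N (mpow N A n) (mpow N (mtr A) m) i j))
  = dot N (ones_iter N A n) (ones_iter N A m).
Proof.
  unfold mmul. rewrite (fsum_ext N _ (fun i => fsum N (fun k => fsum N (fun j =>
      mpow N A n i k * mpow N (mtr A) m k j)))) by (intros; apply fsum_swap).
  rewrite fsum_swap. unfold dot. apply fsum_ext; intros k Hk.
  rewrite <- colsum_mpow, <- rowsum_mpow_tr, <- fsum_scal_r by auto.
  apply fsum_ext; intros i _. rewrite <- fsum_scal_l. reflexivity.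
Qed.

Lemma powerRZ_pred x k : x <> 0 -> powerRZ x (Z.of_nat k - 1) * x = x ^ k.
Proof.
  intros Hx. rewrite pow_powerRZ. rewrite <- (powerRZ_1 x) at 2.
  rewrite <- powerRZ_add by auto. f_equal. lia.
Qed.

Lemma dot_ones_iter_mu N W0 c n m : (1 <= N)%nat ->
  dot N (ones_iter N (mscale c W0) n) (ones_iter N (mscale c W0) m)
  = INR N * ((INR N * c) ^ (n + m) * mu N W0 n m).
Proof.
  intros HN. rewrite <- entry_sum_mpow.
  assert (HN' : INR N <> 0) by (apply not_0_INR; lia).
  assert (Hscale : fsum N (fun i => fsum N (fun j =>
       mmul N (mpow N (mscale c W0) n) (mpow N (mtr (mscale c W0)) m) i j))
     = c ^ (n + m) * fsum N (fun i => fsum N (fun j =>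
       mmul N (mpow N W0 n) (mpow N (mtr W0) m) i j))).
  { rewrite <- fsum_scal_l. apply fsum_ext; intros i _. rewrite <- fsum_scal_l.
    apply fsum_ext; intros j _. unfold mmul. rewrite <- fsum_scal_l.
    apply fsum_ext; intros k _. change (mtr (mscale c W0)) with (mscale c (mtr W0)).
    rewrite !mpow_scale, pow_add. lra. }
  rewrite Hscale. unfold mu, mavg.
  pose proof (powerRZ_pred (INR N) (n + m) HN') as Hp.
  assert (Hpz : powerRZ (INR N) (Z.of_nat (n + m) - 1) <> 0) by (apply powerRZ_NOR; auto).
  rewrite Rpow_mult_distr, <- Hp. field. auto.
Qed.

Lemma cv_const c : Un_cv (fun _ => c) c.
Proof. intros eps He. exists 0%nat. intros. unfold R_dist. rewrite Rminus_diag, Rabs_R0. auto. Qed.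

Lemma cv_ext u v l : (forall n, u n = v n) -> Un_cv u l -> Un_cv v l.
Proof. intros Huv H eps He. destruct (H eps He) as [M HM]. exists M. intros. rewrite <- Huv. auto. Qed.

Lemma cv_shift u l : Un_cv u l -> Un_cv (fun n => u (S n)) l.
Proof. intros H eps He. destruct (H eps He) as [M HM]. exists M. intros n Hn. apply HM. lia. Qed.

Lemma fsum_cv n (F : nat -> nat -> R) (l : nat -> R) :
  (forall k, (k < n)%nat -> Un_cv (fun K => F K k) (l k)) ->
  Un_cv (fun K => fsum n (F K)) (fsum n l).
Proof.
  induction n as [|n IH]; intros H; simpl.
  - apply cv_const.
  - apply CV_plus; [apply IH; intros; apply H; lia | apply H; lia].
Qed.

Lemma infinite_sum_abs_le a b L s : (forall k, Rabs (a k) <= b k) ->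
  infinite_sum a L -> infinite_sum b s -> Rabs L <= s.
Proof.
  intros Hab HL Hs.
  apply (@Rle_cv_lim (fun n => Rabs (sum_f_R0 a n)) (sum_f_R0 b)); [|apply cv_cvabs; exact HL | exact Hs].
  intros n. rewrite !sum_f_R0_fsum. eapply Rle_trans; [apply fsum_abs | apply fsum_le; auto].
Qed.

Lemma cauchy_of_dominated_increments (u T : nat -> R) : Cauchy_crit T ->
  (forall n d, (u (n + d)%nat - u n) ^ 2 <= T (n + d)%nat - T n) -> Cauchy_crit u.
Proof.
  intros HT Hdom eps He.
  destruct (HT (eps * eps)) as [M HM]; [nra|].
  assert (Hinc : forall n d, (n >= M)%nat -> R_dist (u (n + d)%nat) (u n) < eps).
  { intros n d Hn. specialize (HM (n + d)%nat n ltac:(lia) Hn). unfold R_dist in *.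
    rewrite <- (Rabs_pos_eq eps) by lra. apply Rsqr_lt_abs_0. unfold Rsqr.
    pose proof (Hdom n d). pose proof (Rle_abs (T (n + d)%nat - T n)). nra. }
  exists M. intros n m Hn Hm. destruct (Nat.le_ge_cases n m).
  - rewrite R_dist_sym. replace m with (n + (m - n))%nat by lia. auto.
  - replace n with (m + (n - m))%nat by lia. auto.
Qed.

Section GramSummable.
(* A family of vectors with absolutely summable Gram matrix has convergent sums. *)
Variables (N : nat) (u : nat -> vec) (B : R).
Hypothesis gram_bounded :
  forall K, fsum K (fun i => fsum K (fun j => Rabs (dot N (u i) (u j)))) <= B.

Let gram_abs (K : nat) : R := fsum K (fun i => fsum K (fun j => Rabs (dot N (u i) (u j)))).

Lemma gram_abs_block K d :
  gram_abs K + fsum d (fun i => fsum d (fun j => Rabs (dot N (u (K + i)%nat) (u (K + j)%nat))))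
  <= gram_abs (K + d).
Proof.
  unfold gram_abs. rewrite fsum_split.
  rewrite (fsum_ext K (fun i => fsum (K + d) (fun j => Rabs (dot N (u i) (u j))))
                      (fun i => fsum K (fun j => Rabs (dot N (u i) (u j)))
                          + fsum d (fun j => Rabs (dot N (u i) (u (K + j)%nat)))))
    by (intros; apply fsum_split).
  rewrite (fsum_ext d (fun i => fsum (K + d) (fun j => Rabs (dot N (u (K + i)%nat) (u j))))
                      (fun i => fsum K (fun j => Rabs (dot N (u (K + i)%nat) (u j)))
                          + fsum d (fun j => Rabs (dot N (u (K + i)%nat) (u (K + j)%nat)))))
    by (intros; apply fsum_split).
  rewrite !fsum_plus.
  assert (0 <= fsum K (fun i => fsum d (fun j => Rabs (dot N (u i) (u (K + j)%nat)))))
    by (apply fsum_nonneg; intros; apply fsum_nonneg; intros; apply Rabs_pos).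
  assert (0 <= fsum d (fun i => fsum K (fun j => Rabs (dot N (u (K + i)%nat) (u j)))))
    by (apply fsum_nonneg; intros; apply fsum_nonneg; intros; apply Rabs_pos).
  lra.
Qed.

Lemma gram_abs_cauchy : Cauchy_crit gram_abs.
Proof.
  apply CV_Cauchy, growing_cv.
  - intros n. pose proof (gram_abs_block n 1) as H. rewrite Nat.add_1_r in H.
    assert (0 <= fsum 1 (fun i => fsum 1 (fun j =>
                   Rabs (dot N (u (n + i)%nat) (u (n + j)%nat)))))
      by (apply fsum_nonneg; intros; apply fsum_nonneg; intros; apply Rabs_pos).
    lra.
  - exists B. intros x [n ->]. apply gram_bounded.
Qed.

Lemma partial_sum_increment K d k : (k < N)%nat ->
  (fsum (K + d) (fun i => u i k) - fsum K (fun i => u i k)) ^ 2 <= gram_abs (K + d) - gram_abs K.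
Proof.
  intros Hk. set (D := fun k => fsum d (fun i => u (K + i)%nat k)).
  replace (fsum (K + d) (fun i => u i k) - fsum K (fun i => u i k)) with (D k)
    by (unfold D; rewrite fsum_split; ring).
  assert (H1 : D k ^ 2 <= dot N D D).
  { unfold dot. replace (D k ^ 2) with (D k * D k) by ring.
    apply (fsum_ge_term N (fun k => D k * D k)); auto. intros; nra. }
  assert (H2 : dot N D D <= fsum d (fun i => fsum d (fun j =>
                 Rabs (dot N (u (K + i)%nat) (u (K + j)%nat))))).
  { unfold D. rewrite dot_sums. eapply Rle_trans; [apply Rle_abs|].
    eapply Rle_trans; [apply fsum_abs|]. apply fsum_le; intros. apply fsum_abs. }
  pose proof (gram_abs_block K d). lra.
Qed.

Lemma partial_sums_cauchy k : (k < N)%nat -> Cauchy_crit (fun K => fsum K (fun i => u i k)).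
Proof.
  intros Hk. apply (cauchy_of_dominated_increments _ gram_abs gram_abs_cauchy).
  intros; apply partial_sum_increment; auto.
Qed.
End GramSummable.

(* The componentwise sum of a series of vectors (meaningful where it converges). *)
Definition series_limit (u : nat -> vec) : vec :=
  fun k => epsilon (inhabits 0) (fun l => Un_cv (fun K => fsum K (fun i => u i k)) l).

Lemma series_limit_cv u k : Cauchy_crit (fun K => fsum K (fun i => u i k)) ->
  Un_cv (fun K => fsum K (fun i => u i k)) (series_limit u k).
Proof.
  intros H. unfold series_limit. apply epsilon_spec.
  destruct (R_complete _ H) as [l Hl]. exists l; auto.
Qed.

(** * The orthogonal family [z_n] *)

Lemma triangular_uniqueness (p : nat -> R) (T : nat -> nat -> R) : p 0%nat = 1 ->
  (forall n m, fsum (S n) (fun i => fsum (S m) (fun j =>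
                 p (n - i)%nat * p (m - j)%nat * T i j)) = 0) ->
  forall n m, T n m = 0.
Proof.
  intros Hp H n. induction n as [n IHn] using (well_founded_induction lt_wf).
  intros m. induction m as [m IHm] using (well_founded_induction lt_wf).
  specialize (H n m). cbn [fsum] in H.
  rewrite (fsum_zero n) in H.
  2:{ intros i Hi. rewrite fsum_zero.
      - rewrite IHn by auto. lra.
      - intros j _. rewrite IHn by auto. lra. }
  rewrite (fsum_zero m) in H by (intros j Hj; rewrite IHm by auto; lra).
  rewrite !Nat.sub_diag, Hp in H. lra.
Qed.

Section Model.
Variables (N : nat) (W0 : mat) (c : R) (kap : nat -> R) (kap2 : nat -> nat -> R).
Hypothesis HN : (1 <= N)%nat.
Hypothesis Hmc : motif_cumulants N W0 kap kap2.

Let A := mscale c W0.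
Let g := INR N * c.

Definition kterm (k : nat) : R := g ^ k * kap k.
Definition pterm (n : nat) : R := g ^ n * comp_sum kap n.
Definition cterm (i j : nat) : R := g ^ (i + j) * kap2 i j.
Definition gram_target (i j : nat) : R :=
  match i, j with
  | O, O => 1
  | S _, S _ => cterm i j
  | _, _ => 0
  end.

Fixpoint zvec (n : nat) : vec :=
  match n with
  | O => fun _ => 1
  | S n' => fun i => mvec N (mtr A) (zvec n') i - kterm (S n')
  end.

Lemma pterm_0 : pterm 0 = 1.
Proof. unfold pterm. rewrite comp_sum_0. simpl; lra. Qed.

Lemma pterm_S n : pterm (S n) = fsum (S n) (fun k => kterm (S k) * pterm (n - k)).
Proof.
  unfold pterm at 1. rewrite comp_sum_S, <- fsum_scal_l. apply fsum_ext; intros k Hk.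
  unfold kterm, pterm. replace (S n) with (S k + (n - k))%nat at 1 by lia.
  rewrite pow_add. lra.
Qed.

Lemma gram_expansion_split n m :
  fsum (S n) (fun i => fsum (S m) (fun j => pterm (n - i) * pterm (m - j) * gram_target i j))
  = pterm n * pterm m
    + fsum n (fun i => fsum m (fun j => pterm (n - S i) * pterm (m - S j) * cterm (S i) (S j))).
Proof.
  rewrite !fsum_shift, !Nat.sub_0_r.
  rewrite (fsum_zero m) by (intros; simpl; lra).
  rewrite (fsum_ext n _ (fun i => fsum m (fun j =>
             pterm (n - S i) * pterm (m - S j) * cterm (S i) (S j))))
    by (intros i _; rewrite fsum_shift; simpl; lra).
  simpl. lra.
Qed.

Lemma dot_ones_iter_first n : (1 <= n)%nat ->
  dot N (ones_iter N A n) (ones_iter N A 0) = INR N * pterm n.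
Proof.
  intros Hn. unfold A. rewrite dot_ones_iter_mu, Nat.add_0_r by auto.
  rewrite (proj1 Hmc) by auto. reflexivity.
Qed.

Lemma dot_ones_iter_succ n m :
  dot N (ones_iter N A (S n)) (ones_iter N A (S m))
  = INR N * (pterm (S n) * pterm (S m)
      + fsum (S n) (fun i => fsum (S m) (fun j => pterm (n - i) * pterm (m - j) * cterm (S i) (S j)))).
Proof.
  unfold A. rewrite dot_ones_iter_mu, (proj2 Hmc), double_comp_sum by lia. fold g.
  f_equal. rewrite (pterm_S n), (pterm_S m), <- fsum_scal_l, <- fsum_scal_r, <- fsum_plus.
  apply fsum_ext; intros k Hk.
  rewrite <- fsum_scal_l, <- fsum_scal_l, <- fsum_plus. apply fsum_ext; intros l Hl.
  unfold pterm, kterm, cterm.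
  replace (S n + S m)%nat with ((n - k) + (m - l) + (S k + S l))%nat by lia.
  rewrite !pow_add. ring.
Qed.

Lemma moment_expansion n m :
  dot N (ones_iter N A n) (ones_iter N A m) =
  INR N * fsum (S n) (fun i => fsum (S m) (fun j =>
            pterm (n - i) * pterm (m - j) * gram_target i j)).
Proof.
  rewrite gram_expansion_split.
  destruct n as [|n], m as [|m].
  - simpl. rewrite pterm_0. unfold dot. rewrite fsum_const. lra.
  - rewrite dot_sym, dot_ones_iter_first by lia. simpl fsum. rewrite pterm_0. lra.
  - rewrite dot_ones_iter_first by lia. rewrite pterm_0, (fsum_zero (S n)) by auto. lra.
  - rewrite dot_ones_iter_succ. reflexivity.
Qed.

Lemma ones_iter_expansion n i :
  ones_iter N A n i = fsum (S n) (fun j => pterm (n - j) * zvec j i).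
Proof.
  revert i. induction n as [|n IH]; intros i.
  - simpl. rewrite pterm_0. lra.
  - change (ones_iter N A (S n) i) with (mvec N (mtr A) (ones_iter N A n) i). unfold mvec.
    rewrite (fsum_ext N _ (fun l => fsum (S n) (fun j =>
               pterm (n - j) * (mtr A i l * zvec j l))))
      by (intros; rewrite IH, <- fsum_scal_l; apply fsum_ext; intros; lra).
    rewrite fsum_swap, (fsum_shift (S n)), Nat.sub_0_r, pterm_S.
    simpl (zvec 0 i). rewrite Rmult_1_r, <- fsum_plus.
    apply fsum_ext; intros j Hj. rewrite fsum_scal_l. simpl. unfold mvec. lra.
Qed.

Lemma z_orthogonal i j : dot N (zvec i) (zvec j) = INR N * gram_target i j.
Proof.
  apply Rminus_diag_uniq. revert i j.
  apply (triangular_uniqueness pterm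
           (fun i j => dot N (zvec i) (zvec j) - INR N * gram_target i j) pterm_0).
  intros n m.
  pose proof (moment_expansion n m) as H.
  rewrite (dot_ext N _ (fun k => fsum (S n) (fun i => pterm (n - i) * zvec i k))
                   _ (fun k => fsum (S m) (fun j => pterm (m - j) * zvec j k)))
    in H by (intros; apply ones_iter_expansion).
  rewrite dot_sums in H.
  match type of H with ?L = ?Rt => transitivity (L - Rt); [|rewrite H; ring] end.
  rewrite <- fsum_scal_l, <- fsum_minus. apply fsum_ext; intros i _.
  rewrite <- fsum_scal_l, <- fsum_minus. apply fsum_ext; intros j _.
  unfold dot. rewrite (fsum_ext N (fun k => pterm (n - i) * zvec i k * (pterm (m - j) * zvec j k))
    (fun k => pterm (n - i) * pterm (m - j) * (zvec i k * zvec j k))) by (intros; ring).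
  rewrite fsum_scal_l. ring.
Qed.

(** * Convergence of the cumulant series *)

Section Convergence.
Variable Bd : R.
Hypothesis HB : forall K, dsum K (fun n m => Rabs g ^ (n + m) * Rabs (kap2 n m)) <= Bd.

Lemma gram_target_abs_bound K :
  fsum K (fun i => fsum K (fun j => Rabs (gram_target i j))) <= 1 + Bd.
Proof.
  assert (HBd : 0 <= Bd).
  { specialize (HB 0%nat). unfold dsum in HB. simpl in HB. lra. }
  destruct K as [|K]; [simpl; lra|].
  rewrite fsum2_shift. simpl (gram_target 0 0).
  rewrite !fsum_zero by (intros; simpl; rewrite Rabs_R0; lra).
  specialize (HB K). unfold dsum in HB.
  rewrite (fsum_ext K _ (fun i => fsum K (fun j =>
             Rabs g ^ (S i + S j) * Rabs (kap2 (S i) (S j)))))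
    by (intros; apply fsum_ext; intros; simpl gram_target; unfold cterm;
        rewrite Rabs_mult, RPow_abs; reflexivity).
  rewrite Rabs_R1. lra.
Qed.

Let partial (K : nat) : vec := fun k => fsum K (fun i => zvec i k).
Let Z : vec := series_limit zvec.

Lemma partial_z_cv k : (k < N)%nat -> Un_cv (fun K => partial K k) (Z k).
Proof.
  intros Hk. apply series_limit_cv, (partial_sums_cauchy N zvec (INR N * (1 + Bd))); auto.
  intros K.
  apply Rle_trans with (INR N * fsum K (fun i => fsum K (fun j => Rabs (gram_target i j)))).
  - right. rewrite <- fsum_scal_l. apply fsum_ext; intros i _.
    rewrite <- fsum_scal_l. apply fsum_ext; intros j _.
    rewrite z_orthogonal, Rabs_mult, (Rabs_pos_eq (INR N)) by apply pos_INR. reflexivity.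
  - apply Rmult_le_compat_l; [apply pos_INR | apply gram_target_abs_bound].
Qed.

Lemma dot_partial_z K : dot N (partial (S K)) (partial (S K)) = INR N * (1 + dsum K cterm).
Proof.
  unfold partial. rewrite dot_sums.
  rewrite (fsum_ext _ _ (fun i => fsum (S K) (fun j => INR N * gram_target i j)))
    by (intros; apply fsum_ext; intros; apply z_orthogonal).
  rewrite fsum2_shift. simpl (gram_target 0 0).
  rewrite !fsum_zero by (intros; simpl; lra).
  unfold dsum.
  rewrite (fsum_ext K (fun i => fsum K (fun j => INR N * gram_target (S i) (S j)))
             (fun i => INR N * fsum K (fun j => cterm (S i) (S j))))
    by (intros; rewrite <- fsum_scal_l; reflexivity).
  rewrite fsum_scal_l. ring.
Qed.

Lemma cterm_series_cv : Un_cv (fun K => dsum K cterm) (dot N Z Z / INR N - 1).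
Proof.
  assert (HNp : 0 < INR N) by (apply lt_0_INR; lia).
  apply (cv_ext (fun K => dot N (partial (S K)) (partial (S K)) * / INR N - 1)).
  { intros K. rewrite dot_partial_z. field. lra. }
  apply CV_minus; [|apply cv_const]. apply CV_mult; [|apply cv_const].
  apply (cv_shift (fun K => dot N (partial K) (partial K))).
  apply fsum_cv. intros k Hk. apply CV_mult; apply partial_z_cv; auto.
Qed.

Lemma mvec_partial_z K k :
  mvec N (mtr A) (partial K) k = partial (S K) k - 1 + fsum K (fun n => kterm (S n)).
Proof.
  unfold mvec, partial. rewrite (fsum_shift K). simpl (zvec 0 k).
  rewrite (fsum_ext N _ (fun l => fsum K (fun i => mtr A k l * zvec i l)))
    by (intros; rewrite fsum_scal_l; reflexivity).
  rewrite fsum_swap.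
  replace (1 + fsum K (fun i => zvec (S i) k) - 1 + fsum K (fun n => kterm (S n)))
    with (fsum K (fun i => zvec (S i) k) + fsum K (fun n => kterm (S n))) by ring.
  rewrite <- fsum_plus. apply fsum_ext; intros. simpl. unfold mvec. ring.
Qed.

Lemma mvec_partial_z_cv M k : Un_cv (fun K => mvec N M (partial K) k) (mvec N M Z k).
Proof. apply fsum_cv. intros l Hl. apply CV_mult; [apply cv_const | apply partial_z_cv; auto]. Qed.

Let L1 : R := mvec N (mtr A) Z 0%nat - Z 0%nat + 1.

Lemma kterm_series_cv : Un_cv (fun K => fsum K (fun n => kterm (S n))) L1.
Proof.
  apply (cv_ext (fun K => mvec N (mtr A) (partial K) 0%nat - partial (S K) 0%nat + 1)).
  { intros K. rewrite mvec_partial_z. ring. }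
  apply CV_plus; [|apply cv_const]. apply CV_minus; [apply mvec_partial_z_cv|].
  apply (cv_shift (fun K => partial K 0%nat)). apply partial_z_cv; lia.
Qed.

Lemma Z_resolvent_equation k : (k < N)%nat -> mvec N (msub mid (mtr A)) Z k = 1 - L1.
Proof.
  intros Hk.
  assert (HAZ : mvec N (mtr A) Z k = Z k - 1 + L1).
  { apply (UL_sequence (fun K => mvec N (mtr A) (partial K) k)); [apply mvec_partial_z_cv|].
    apply (cv_ext (fun K => partial (S K) k - 1 + fsum K (fun n => kterm (S n))));
      [intros; rewrite mvec_partial_z; reflexivity|].
    apply CV_plus; [apply CV_minus; [|apply cv_const] | apply kterm_series_cv].
    apply (cv_shift (fun K => partial K k)). apply partial_z_cv; auto. }
  unfold mvec, msub. rewrite (fsum_ext N _ (fun j => mid k j * Z j - mtr A k j * Z j)) by (intros; ring).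
  rewrite fsum_minus, fsum_mid_l by auto. fold (mvec N (mtr A) Z k). lra.
Qed.

(* The analytic content of the theorem: both cumulant series converge, and their
   sums are read off from the vector [Z = sum_i z_i]. *)
Lemma cumulant_series_resolvent : exists L1 L2 Z,
  infinite_sum (fun k => g ^ S k * kap (S k)) L1 /\
  Un_cv (fun K => dsum K (fun n m => g ^ (n + m) * kap2 n m)) L2 /\
  (forall k, (k < N)%nat -> mvec N (msub mid (mtr A)) Z k = 1 - L1) /\
  dot N Z Z = INR N * (1 + L2).
Proof.
  exists L1, (dot N Z Z / INR N - 1), Z. split; [|split; [|split]].
  - intros eps He. destruct (kterm_series_cv eps He) as [M HM]. exists M. intros n Hn.
    rewrite sum_f_R0_fsum. apply HM. lia.
  - apply cterm_series_cv.
  - apply Z_resolvent_equation.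
  - assert (0 < INR N) by (apply lt_0_INR; lia). field. lra.
Qed.
End Convergence.
End Model.

Lemma mavg_scale N c X : mavg N (mscale c X) = c * mavg N X.
Proof.
  unfold mavg, mscale.
  rewrite (fsum_ext N _ (fun i => c * fsum N (fun j => X i j))) by (intros; apply fsum_scal_l).
  rewrite fsum_scal_l. unfold Rdiv. ring.
Qed.

Theorem theorem1 (N : nat) (W0 : mat) (a w Sx : R)
  (kap : nat -> R) (kap2 : nat -> nat -> R) :
  (1 <= N)%nat ->
  0 < Sx ->
  spectral_radius_lt1 N (mscale (a * w) W0) ->
  motif_cumulants N W0 kap kap2 ->
  let g := INR N * a * w in
  (exists s, infinite_sum (fun k => Rabs g ^ (S k) * Rabs (kap (S k))) s /\ s < 1) ->
  (exists B, forall K, dsum K (fun n m => Rabs g ^ (n + m) * Rabs (kap2 n m)) <= B) ->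
  exists L1 L2,
    infinite_sum (fun k => g ^ (S k) * kap (S k)) L1 /\
    Un_cv (fun K => dsum K (fun n m => g ^ (n + m) * kap2 n m)) L2 /\
    mavg N (Sy N Sx (mscale (a * w) W0)) / Sx
      = / INR N * / ((1 - L1) ^ 2) * (1 + L2).
Proof.
  intros HN HSx Hsr Hmc g [s [Hs Hs1]] [Bd HB].
  assert (Eg : g = INR N * (a * w)) by (unfold g; ring).
  clearbody g. subst g.
  destruct (cumulant_series_resolvent N W0 (a * w) kap kap2 HN Hmc Bd HB)
    as [L1 [L2 [Z [HL1 [HL2 [HZ HZZ]]]]]].
  exists L1, L2. split; [exact HL1|]. split; [exact HL2|].
  (* [|L1| <= s < 1], so the resolvent equation for [Z] can be divided by [1 - L1]. *)
  assert (HL1s : Rabs L1 <= s).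
  { refine (infinite_sum_abs_le _ _ L1 s _ HL1 Hs).
    intros k. rewrite Rabs_mult, RPow_abs. lra. }
  assert (Hc : 1 - L1 <> 0) by (pose proof (Rle_abs L1); lra).
  pose proof (resolvent_entry_sum N _ Z (1 - L1) (spectral_radius_injective N _ Hsr) HZ)
    as Hsum.
  assert (HNp : 0 < INR N) by (apply lt_0_INR; lia).
  unfold Sy. rewrite mavg_scale. unfold mavg.
  set (total := fsum N (fun i => fsum N (fun j =>
           mmul N (minv N (msub mid (mscale (a * w) W0)))
                  (minv N (msub mid (mtr (mscale (a * w) W0)))) i j))) in *.
  assert (Htotal : total = INR N * (1 + L2) / (1 - L1) ^ 2)
    by (rewrite <- HZZ, <- Hsum; field; auto).
  rewrite Htotal. field. repeat split; lra.
Qed.
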